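(* Let $\Omega$ be a Cantor group with identity $e$ and let $T$ be a minimal translation of $\Omega$. For $f\in C(\Omega,\mathbb{R})$ let $F(\omega)=(f(T^n(\omega)))_{n\in\mathbb{Z}}\in\ell^\infty(\mathbb{Z})$. Then there exists $f\in C(\Omega,\mathbb{R})$ such that $\mathrm{hull}(F(e))\cong\Omega$ as topological groups.
   Context: A Cantor group is a totally disconnected compact abelian topological group without isolated points. A translation of a topological group $\Omega$ is a map $T(\omega)=\omega\cdot\omega_0$ for some fixed $\omega_0\in\Omega$; it is minimal if $\{T^n(\omega):n\in\mathbb{Z}\}$ is dense in $\Omega$ for every $\omega$. $\sigma$ is the left shift on $\ell^\infty(\mathbb{Z})$ (sup norm), $(\sigma d)_n=d_{n+1}$, and $\mathrm{hull}(d)$ is the closure of $\{\sigma^k d:k\in\mathbb{Z}\}$. In this setting $F(e)$ is limit-periodic (a uniform limit of periodic sequences), and for a limit-periodic $d$, $\mathrm{hull}(d)$ carries a unique topological group structure with identity $d$ such that $k\mapsto\sigma^k(d)$ is a homomorphism; this is the group structure on $\mathrm{hull}(F(e))$. *)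

From HB Require Import structures.
From mathcomp Require Import all_boot all_order all_algebra.
From mathcomp Require Import all_classical all_reals all_analysis.
Set Implicit Arguments. Unset Strict Implicit. Unset Printing Implicit Defensive.
Import Order.TTheory GRing.Theory Num.Theory numFieldTopology.Exports numFieldNormedType.Exports.
Local Open Scope classical_set_scope.
Local Open Scope ring_scope.

Definition cantor_group (Om : topologicalZmodType) : Prop :=
  [/\ totally_disconnected [set: Om], compact [set: Om]
    & forall x : Om, ~ open [set x]].

(* T^n(w) for the translation T(w) = w + w0, n an integer. *)
Definition transl_pow (Om : topologicalZmodType) (w0 : Om) (n : int) (w : Om) : Om :=
  w + w0 *~ n.

Definition minimal_translation (Om : topologicalZmodType) (w0 : Om) : Prop :=
  forall w : Om, dense (range (fun n : int => transl_pow w0 n w)).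

(* l^oo(Z) carrying the sup-norm topology: sequences Z -> R with the topology
   of uniform convergence (which agrees with the sup-norm topology on bounded
   sequences; all sequences considered below are bounded). *)
Notation seqZ R := ({uniform int -> R}) (only parsing).

Definition Fseq (R : realType) (Om : topologicalZmodType) (w0 : Om) (f : Om -> R)
  (w : Om) : seqZ R := fun n => f (transl_pow w0 n w).

Definition shift (R : realType) (k : int) (d : seqZ R) : seqZ R := fun n => d (n + k).

Definition hull (R : realType) (d : seqZ R) : set (seqZ R) :=
  closure (range (fun k : int => shift k d)).

(* By the context,
   for limit-periodic d such a structure is unique. *)
Definition hull_group_structure (R : realType) (d : seqZ R)
  (mul : seqZ R -> seqZ R -> seqZ R) (inv : seqZ R -> seqZ R) : Prop :=
  let H := hull d in
  [/\ (forall x y, H x -> H y -> H (mul x y)),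
      (forall x, H x -> H (inv x)),
      (forall x y z, H x -> H y -> H z -> mul x (mul y z) = mul (mul x y) z),
      (forall x, H x -> mul d x = x /\ mul x d = x)
    & (forall x, H x -> mul x (inv x) = d /\ mul (inv x) x = d)] /\
  [/\ {within H `*` H, continuous (fun p : seqZ R * seqZ R => mul p.1 p.2)},
      {within H, continuous inv}
    & forall k m : int, mul (shift k d) (shift m d) = shift (k + m) d].

Definition hull_top_group_iso (R : realType) (Om : topologicalZmodType)
  (d : seqZ R) (mul : seqZ R -> seqZ R -> seqZ R) (phi : seqZ R -> Om) : Prop :=
  [/\ {within hull d, continuous phi},
      (exists psi : Om -> seqZ R,
         [/\ continuous psi,
             (forall w, hull d (psi w) /\ phi (psi w) = w)
           & (forall x, hull d x -> psi (phi x) = x)])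
    & forall x y, hull d x -> hull d y -> phi (mul x y) = phi x + phi y].

From Pilot Require Import Defs.
From HB Require Import structures.
From mathcomp Require Import all_boot all_order all_algebra.
From mathcomp Require Import all_classical all_reals all_analysis.
From mathcomp Require Import Rstruct.
Import Order.TTheory GRing.Theory Num.Theory numFieldTopology.Exports numFieldNormedType.Exports.
Local Open Scope classical_set_scope.
Local Open Scope ring_scope.

(* A compact totally disconnected Hausdorff space is zero-dimensional, and in a
   compact group the stabilizer of a clopen set is an open subgroup. By density
   of the orbit of 0, an open subgroup S meets it in some mZ w0, m > 0, and is
   then the closure V_m of mZ w0. So the clopen sets V_m, for the m for which
   they arise this way, separate 0 from every other point, and
   f(x) = 1/(m+1), with m the first such index with x outside V_m, is a
   continuous function vanishing only at 0. Then w |-> F(w) is a continuous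
   injection of the compact group Om onto hull(F(0)) (minimality again), hence
   a homeomorphism, and the group law of Om transported along it is the
   required structure on the hull. *)

Lemma totally_disconnected_T0 {T : topologicalType} :
  totally_disconnected [set: T] ->
  forall x y : T, x != y -> exists2 U : set T, open U & ~ (U x <-> U y).
Proof.
move=> td x y xy; apply: contrapT => /forall2NP indist.
have {}indist U : open U -> (U x <-> U y).
  by move=> oU; have [//|/contrapT] := indist U.
suff : connected_component [set: T] x y by rewrite td // => /= yx; rewrite yx eqxx in xy.
exists [set x; y]; last by right.
split => //; first by left.
move=> B [b Bb] [C oC BE] _; apply/seteqP; split; first by rewrite BE; exact: subIsetl.
have [Cx Cy] : C x /\ C y.
  by move: Bb; rewrite BE => -[[->|->] Cb]; split => //; apply/(indist C oC).
by move=> _ [->|->]; rewrite BE; split => //; [left|right].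
Qed.

Section QuasiComponent.
Context {T : topologicalType}.
Hypothesis cptT : compact [set: T].

Definition quasi_component (x : T) := [set y | forall C : set T, clopen C -> C x -> C y].

Lemma closed_quasi_component x : closed (quasi_component x).
Proof.
have -> : quasi_component x = \bigcap_(C in [set C : set T | clopen C /\ C x]) C.
  by apply/seteqP; split => y Qy; [move=> C [] | move=> C ? ?]; apply: Qy.
by apply: closed_bigI => C [[]].
Qed.

(* By compactness, if the quasi-component misses the closed set ~` (U `|` V),
   so does a clopen neighbourhood C of x; then C `&` U is clopen. *)
Lemma quasi_component_split x (U V : set T) : open U -> open V ->
  U `&` V = set0 -> quasi_component x `<=` U `|` V -> U x -> quasi_component x `<=` U.
Proof.
move=> oU oV UV QUV Ux.
pose K := ~` (U `|` V).
have /compact_near_coveringP cK : compact K.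
  by apply: (subclosed_compact _ cptT) => //; exact: open_closedC (openU oU oV).
pose F := filter_from [set C : set T | clopen C /\ C x]
  (fun C => [set C' : set T | clopen C' /\ C' x /\ C' `<=` C]).
have FF : Filter F.
  apply: filter_from_filter; first by exists setT; split => //; exact: clopenT.
  move=> C1 C2 [cC1 C1x] [cC2 C2x]; exists (C1 `&` C2); first by split; [exact: clopenI|].
  by move=> C' [cC' [C'x]]; rewrite subsetI => -[? ?]; split; split.
have [z Kz|C [cC Cx] KC] := cK (set T) F (fun C y => ~ C y) FF.
  have : ~ quasi_component x z by move=> /QUV.
  move=> /existsNP [C /not_implyP [cC /not_implyP [Cx nCz]]].
  exists (~` C, [set C' : set T | clopen C' /\ C' x /\ C' `<=` C]).
    split => /=; last by exists C.
    by apply: open_nbhs_nbhs; split => //; apply: closed_openC; case: cC.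
  by move=> [z' C'] /= [nCz' [_ [_ C'C]]] /C'C.
have {}KC : K `<=` (fun y => ~ C y) by apply: KC; split => //; split.
have cCU : clopen (C `&` U).
  split; first exact: openI (proj1 cC) oU.
  have -> : C `&` U = C `&` ~` V.
    apply/seteqP; split => z [Cz Hz]; split => //.
      by move=> Vz; have : (U `&` V) z by []; rewrite UV.
    by apply: contrapT => nUz; apply: (KC z) => // -[].
  exact: closedI (proj2 cC) (open_closedC oV).
by move=> y Qy; have [] := Qy _ cCU.
Qed.

Lemma connected_quasi_component (x : T) : hausdorff_space T -> connected (quasi_component x).
Proof.
move=> hsT.
(* The realType parameter of [normal_openP] is irrelevant to its statement. *)
have /(@normal_openP Rdefinitions.R T) nT := compact_normal hsT cptT.
move=> B [b Bb] [C1 oC1 BE1] [C2 cC2 BE2].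
have clB : closed B by rewrite BE2; exact: closedI (closed_quasi_component x) cC2.
have clA : closed (quasi_component x `&` ~` C1).
  exact: closedI (closed_quasi_component x) (open_closedC oC1).
have BA : B `&` (quasi_component x `&` ~` C1) = set0.
  by apply/seteqP; split => // z [+ [_ nC]]; rewrite BE1 => -[].
have [U [V [oU oV BU AV UV]]] := nT _ _ clB clA BA.
have QUV : quasi_component x `<=` U `|` V.
  move=> y Qy; have [C1y|nC1y] := pselect (C1 y).
    by left; apply: BU; rewrite BE1.
  by right; apply: AV.
have [C1x|nC1x] := pselect (C1 x).
  have Bx : B x by rewrite BE1; split => // C _.
  have QU := @quasi_component_split x U V oU oV UV QUV (BU x Bx).
  apply/seteqP; split; first by rewrite BE1; exact: subIsetl.
  move=> y Qy; rewrite BE1; split => //; apply: contrapT => nC1y.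
  have : (U `&` V) y by split; [exact: QU | exact: AV].
  by rewrite UV.
have VU : V `&` U = set0 by rewrite setIC.
have QV : quasi_component x `<=` V.
  apply: (@quasi_component_split x V U oV oU VU); first by move=> y /QUV [] ?; [right|left].
  by apply: AV; split => // C _.
have : (U `&` V) b by split; [exact: BU | apply: QV; move: Bb; rewrite BE1 => -[]].
by rewrite UV.
Qed.

Lemma compact_totally_disconnected_zero_dimensional :
  hausdorff_space T -> totally_disconnected [set: T] -> zero_dimensional T.
Proof.
move=> hsT td x y xy; apply: contrapT => nC.
suff : connected_component [set: T] x y by rewrite td // => /= yx; rewrite yx eqxx in xy.
exists (quasi_component x) => //; first by split => //; exact: connected_quasi_component.
move=> C cC Cx; apply: contrapT => nCy; apply: nC; exists C; split => //.
Qed.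

End QuasiComponent.

Definition is_subgroup {V : zmodType} (S : set V) :=
  S 0 /\ forall x y, S x -> S y -> S (x - y).

Section Subgroup.
Context {V : zmodType} {S : set V} (subS : is_subgroup S).

Lemma subgroupN x : S x -> S (- x).
Proof. by move=> Sx; rewrite -sub0r; apply: subS.2 => //; exact: subS.1. Qed.

Lemma subgroupD x y : S x -> S y -> S (x + y).
Proof. by move=> Sx Sy; rewrite -[y]opprK; apply: subS.2 => //; exact: subgroupN. Qed.

Lemma subgroupMz x (n : int) : S x -> S (x *~ n).
Proof.
move=> Sx; have Sxn (k : nat) : S (x *+ k).
  by elim: k => [|k IH]; [rewrite mulr0n; exact: subS.1 | rewrite mulrS; exact: subgroupD].
by case: n => k; rewrite ?NegzE ?mulrNz -pmulrn //; exact: subgroupN.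
Qed.

End Subgroup.

Lemma int_subgroup_dvdz {S : set int} : is_subgroup S -> (exists2 n, S n & n != 0) ->
  exists2 m : nat, (0 < m)%N & forall k, S k <-> (m%:Z %| k)%Z.
Proof.
move=> subS [n Sn n0].
have exP : exists k : nat, (0 < k)%N && `[< S k%:Z >].
  exists `|n|%N; rewrite absz_gt0 n0; apply/asboolP.
  by rewrite abszE; case: (ger0P n) => _ //; exact: subgroupN.
case: (ex_minnP exP) => m /andP[m0 /asboolP Sm] mmin; exists m => // k; split; last first.
  by move=> /dvdzP [q ->]; rewrite mulrC -mulrzz; exact: subgroupMz.
move=> Sk; apply/dvdz_mod0P; apply: contrapT => /eqP r0.
have rge0 : 0 <= (k %% m)%Z by rewrite modz_ge0 // eqz_nat -lt0n.
have Sr : S (k %% m)%Z.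
  have -> : (k %% m)%Z = k - m%:Z *~ (k %/ m)%Z.
    by rewrite mulrzz mulrC {2}(divz_eq k m) addrAC subrr add0r.
  by apply: subS.2 => //; exact: subgroupMz.
have /mmin : (0 < `|(k %% m)%Z|)%N && `[< S `|(k %% m)%Z|%:Z >].
  by rewrite absz_gt0 r0 gez0_abs //; exact/asboolP.
by rewrite -lez_nat gez0_abs // leNgt ltz_pmod ?ltz_nat.
Qed.

Section TopologicalZmodule.
Context {Om : topologicalZmodType}.

Lemma continuous_addr (a : Om) : continuous (fun z : Om => z + a).
Proof.
move=> z; apply: (@continuous_comp _ _ _ (fun z => (z, a)) (fun p : Om * Om => p.1 + p.2));
  last exact: add_continuous.
by apply: cvg_pair; [exact: cvg_id | exact: cvg_cst].
Qed.

Lemma continuous_subl (a : Om) : continuous (fun z : Om => a - z).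
Proof.
move=> z; apply: (@continuous_comp _ _ _ (fun z => (a, z)) (fun p : Om * Om => p.1 - p.2));
  last exact: sub_continuous.
by apply: cvg_pair; [exact: cvg_cst | exact: cvg_id].
Qed.

Lemma continuous_subr (a : Om) : continuous (fun z : Om => z - a).
Proof. exact: continuous_addr. Qed.

Lemma open_nbhs0_avoid (td : totally_disconnected [set: Om]) (x : Om) :
  x != 0 -> exists U : set Om, [/\ open U, U 0 & ~ U x].
Proof.
move=> x0; have [U oU] := totally_disconnected_T0 td _ _ x0.
have [Ux|nUx] := pselect (U x); last first.
  by move=> sepU; exists U; split => //; apply: contrapT => U0; apply: sepU.
move=> sepU; exists [set z | U (x - z)]; split.
- by have /continuousP := continuous_subl x; apply.
- by rewrite /= subr0.
- by rewrite /= subrr => U0; apply: sepU.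
Qed.

Lemma totally_disconnected_zmod_hausdorff : totally_disconnected [set: Om] -> hausdorff_space Om.
Proof.
move=> td x y clxy; apply: contrapT => /eqP xy.
have [U [oU U0 nUyx]] : exists U : set Om, [/\ open U, U 0 & ~ U (y - x)].
  by apply: open_nbhs0_avoid td _ _; rewrite subr_eq0 eq_sym.
have : nbhs (x - y) [set z | U (z - (x - y))].
  apply: open_nbhs_nbhs; split; last by rewrite /= subrr.
  by have /continuousP := continuous_subr (x - y); apply.
move=> /(@sub_continuous Om (x, y)) [[A B] /= [nA nB] AB].
have [z [Az Bz]] := clxy A B nA nB.
by apply: nUyx; have := AB (z, z) (conj Az Bz); rewrite /= subrr sub0r opprB.
Qed.

Lemma nbhs_subgroup_open {S : set Om} : is_subgroup S -> nbhs 0 S -> open S.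
Proof.
move=> subS S0; rewrite openE => s Ss.
have : \forall z \near s, S (z - s) by apply: continuous_subr; rewrite subrr.
by apply: filterS => z /(subgroupD subS)/(_ Ss); rewrite subrK.
Qed.

Lemma open_subgroup_closed {S : set Om} : is_subgroup S -> open S -> closed S.
Proof.
move=> subS oS; rewrite -openC openE => z nSz.
have : \forall y \near z, S (y - z).
  by apply: continuous_subr; rewrite subrr; apply: open_nbhs_nbhs; split => //; exact: subS.1.
apply: filterS => y Syz Sy; apply: nSz.
by have := subS.2 _ _ Sy Syz; rewrite opprB addrC subrK.
Qed.

Definition stabilizer (U : set Om) := [set p | forall u, U (u + p) <-> U u].

Lemma stabilizer_subgroup U : is_subgroup (stabilizer U).
Proof.
split; first by move=> u; rewrite addr0.
by move=> x y Sx Sy u; rewrite -(Sy (u + (x - y))) addrA subrK; exact: Sx.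
Qed.

(* Each point x has a neighbourhood A and a neighbourhood B of 0 with A + B
   inside U or inside ~` U; compactness makes B uniform in x. *)
Lemma clopen_stabilizer_nbhs {U : set Om} :
  compact [set: Om] -> clopen U -> nbhs 0 (stabilizer U).
Proof.
move=> cpt [oU cU]; have /compact_near_coveringP ncov := cpt.
suff : \forall w \near (0 : Om), [set: Om] `<=` (fun x => U (x + w) <-> U x).
  by apply: filterS => w Hw u; exact: Hw.
apply: ncov => x _.
have side (W : set Om) : open W -> W x -> W = U \/ W = ~` U ->
    \forall x' \near x & w \near (0 : Om), U (x' + w) <-> U x'.
  move=> oW Wx WU; have : nbhs (x + 0) W by rewrite addr0; exact: open_nbhs_nbhs.
  move=> /(@add_continuous Om (x, 0)) [[A B] /= [nA nB] AB].
  exists (A `&` W, B); first by split => //; apply: filterI => //; exact: open_nbhs_nbhs.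
  move=> [x' w] /= [[Ax' Wx'] Bw]; have /= Wx'w := AB (x', w) (conj Ax' Bw).
  by case: WU => WE; move: Wx'w Wx'; rewrite WE.
have [Ux|nUx] := pselect (U x); first exact: side U oU Ux (or_introl erefl).
exact: side (~` U) (closed_openC cU) nUx (or_intror erefl).
Qed.
End TopologicalZmodule.

Definition mult_closure {Om : topologicalZmodType} (w0 : Om) (m : nat) : set Om :=
  closure [set w0 *~ n | n in [set n : int | (m%:Z %| n)%Z]].

Definition orbit_index {Om : topologicalZmodType} (w0 : Om) (m : nat) (S : set Om) :=
  [/\ open S, is_subgroup S & forall n : int, S (w0 *~ n) <-> (m%:Z %| n)%Z].

Definition open_index {Om : topologicalZmodType} (w0 : Om) (m : nat) :=
  exists S, orbit_index w0 m S.

Section MinimalTranslation.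
Context {Om : topologicalZmodType} {w0 : Om} (mt : minimal_translation w0).

Lemma orbit_meets_open {W : set Om} : open W -> W !=set0 -> exists n : int, W (w0 *~ n).
Proof.
move=> oW W0; have [x [Wx [n _ nx]]] := mt 0 W W0 oW.
by exists n; move: Wx; rewrite -nx /transl_pow add0r.
Qed.

Lemma mult_closure0 m : mult_closure w0 m 0.
Proof. by apply: subset_closure; exists 0 => //; exact: dvdz0. Qed.

Lemma orbit_index_closure {m : nat} {S : set Om} : orbit_index w0 m S -> mult_closure w0 m = S.
Proof.
move=> [oS subS SE]; apply/seteqP; split.
  rewrite ((closure_id S).1 (open_subgroup_closed subS oS)).
  by apply: closureS => _ [n mn <-]; exact/SE.
move=> s Ss B; rewrite nbhsE; case=> W [oW Ws] WB.
have [n [Wn Sn]] := orbit_meets_open (openI oW oS) (ex_intro _ s (conj Ws Ss)).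
by exists (w0 *~ n); split; [exists n => //; exact/SE | exact: WB].
Qed.

Lemma open_index_clopen {m : nat} : open_index w0 m -> clopen (mult_closure w0 m).
Proof.
move=> [S iS]; rewrite (orbit_index_closure iS); case: iS => oS subS _.
by split => //; exact: open_subgroup_closed.
Qed.

Lemma open_subgroup_orbit_index {S : set Om} :
  hausdorff_space Om -> (forall x : Om, ~ open [set x]) ->
  open S -> is_subgroup S -> exists m, orbit_index w0 m S.
Proof.
move=> hs nop oS subS.
have [n Sn n0] : exists2 n : int, S (w0 *~ n) & n != 0.
  have cl0 : closed [set (0 : Om)] by exact: accessible_closed_set1 (hausdorff_accessible hs) 0.
  have [|n [Sn /eqP wn0]] := orbit_meets_open (openI oS (closed_openC cl0)).
    apply: contrapT => /set0P/negP; rewrite negbK => /eqP S0.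
    apply: (nop 0); suff -> : [set (0 : Om)] = S by [].
    apply/seteqP; split=> [_ -> | z Sz]; first exact: subS.1.
    by apply: contrapT => z0; have : (S `&` ~` [set 0]) z by []; rewrite S0.
  by exists n => //; apply: contraNneq wn0 => ->; rewrite mulr0z.
have subSZ : is_subgroup [set n : int | S (w0 *~ n)].
  by split=> [|a b Sa Sb]; rewrite /= ?mulr0z ?mulrzBr; [exact: subS.1 | exact: subS.2].
have [m m0 mE] := int_subgroup_dvdz subSZ (ex_intro2 _ _ n Sn n0).
by exists m; split.
Qed.

Lemma open_index_separates {p : Om} :
  compact [set: Om] -> totally_disconnected [set: Om] -> (forall x : Om, ~ open [set x]) ->
  p != 0 -> exists m, open_index w0 m /\ ~ mult_closure w0 m p.
Proof.
move=> cpt td nop p0; have hs := totally_disconnected_zmod_hausdorff td.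
have [U [cU U0 nUp]] : exists U : set Om, [/\ clopen U, U 0 & ~ U p].
  by apply: (compact_totally_disconnected_zero_dimensional cpt hs td); rewrite eq_sym.
have subS := stabilizer_subgroup U.
have oS := nbhs_subgroup_open subS (clopen_stabilizer_nbhs cpt cU).
have [m iS] := open_subgroup_orbit_index hs nop oS subS.
exists m; split; first by exists (stabilizer U).
by rewrite (orbit_index_closure iS) => /(_ 0); rewrite add0r => /iffRL/(_ U0).
Qed.

End MinimalTranslation.

Definition in_mult_closures {Om : topologicalZmodType} (w0 : Om) (N : nat) : set Om :=
  [set x | forall j, (j < N)%N -> open_index w0 j -> mult_closure w0 j x].

Definition escapes {Om : topologicalZmodType} (w0 : Om) (x : Om) : pred nat :=
  fun m => `[< open_index w0 m /\ ~ mult_closure w0 m x >].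

(* 1/(m+1) for the least m with open_index w0 m and x outside mult_closure w0 m;
   0 if there is none, which happens only at x = 0. *)
Definition separating_fun (R : realType) {Om : topologicalZmodType} (w0 : Om) (x : Om) : R :=
  match pselect (exists m, escapes w0 x m) with
  | left e => (ex_minn e).+1%:R^-1
  | right _ => 0
  end.

Section SeparatingFunction.
Context (R : realType) {Om : topologicalZmodType} {w0 : Om} (mt : minimal_translation w0).

Local Notation V := (mult_closure w0).
Local Notation in_mult_closures := (in_mult_closures w0).
Local Notation escapes := (escapes w0).
Local Notation separating_fun := (separating_fun R w0).

Lemma open_in_mult_closures N : open (in_mult_closures N).
Proof.
elim: N => [|N IH].
  have -> : in_mult_closures 0 = setT by apply/seteqP; split => // x _ j.
  exact: openT.
have -> : in_mult_closures N.+1 = in_mult_closures N `&` [set x | open_index w0 N -> V N x].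
  apply/seteqP; split=> x; first by move=> xN; split=> [j /ltnW|]; apply: xN.
  by move=> [xN xV] j; rewrite ltnS leq_eqVlt => /orP[/eqP ->|] //; exact: xN.
apply: openI => //; have [iN|niN] := pselect (open_index w0 N).
  have -> : [set x | open_index w0 N -> V N x] = V N.
    by apply/seteqP; split => x /=; [apply | move=> ? _].
  exact: (open_index_clopen mt iN).1.
have -> : [set x | open_index w0 N -> V N x] = setT by apply/seteqP; split => // x _ /niN.
exact: openT.
Qed.

Lemma separating_fun_eq {x : Om} {m : nat} :
  open_index w0 m -> ~ V m x -> in_mult_closures m x -> separating_fun x = m.+1%:R^-1.
Proof.
move=> im nVx xm; rewrite /separating_fun; case: pselect => [e|ne]; last first.
  by exfalso; apply: ne; exists m; apply/asboolP.
case: (ex_minnP e) => k /asboolP [ik nVk] kmin; congr (_.+1%:R^-1).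
apply/eqP; rewrite eqn_leq kmin ?andbT; last exact/asboolP.
by rewrite leqNgt; apply/negP => km; apply: nVk; apply: xm.
Qed.

Lemma separating_fun_ge0 x : 0 <= separating_fun x.
Proof. by rewrite /separating_fun; case: pselect => // e; rewrite invr_ge0. Qed.

Lemma separating_fun_le {x : Om} {N : nat} :
  in_mult_closures N x -> separating_fun x <= N.+1%:R^-1.
Proof.
move=> xN; rewrite /separating_fun; case: pselect => [e|_]; last by rewrite invr_ge0.
case: (ex_minnP e) => k /asboolP [ik nVk] _.
have Nk : (N <= k)%N by rewrite leqNgt; apply/negP => kN; apply: nVk; apply: xN.
by rewrite lef_pV2 ?posrE ?ltr0n // ler_nat.
Qed.

Lemma separating_fun0 x : (forall m, open_index w0 m -> V m x) -> separating_fun x = 0.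
Proof.
move=> xV; rewrite /separating_fun; case: pselect => [[m /asboolP [im []]]|//].
exact: xV.
Qed.

Lemma separating_fun_at0 : separating_fun 0 = 0.
Proof. by apply: separating_fun0 => m _; exact: mult_closure0. Qed.

Lemma separating_fun_gt0 {x : Om} : compact [set: Om] -> totally_disconnected [set: Om] ->
  (forall y : Om, ~ open [set y]) -> x != 0 -> 0 < separating_fun x.
Proof.
move=> cpt td nop x0; have [m [im nVx]] := open_index_separates mt cpt td nop x0.
rewrite /separating_fun; case: pselect => [e|ne]; first by rewrite invr_gt0 ltr0n.
by case: ne; exists m; apply/asboolP.
Qed.

(* Near a point escaping at m the function is locally constant; near a point
   in all closures it is small, since in_mult_closures N is open. *)
Lemma separating_fun_continuous : continuous separating_fun.
Proof.
move=> x; apply/cvgrPdist_lt => eps eps0.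
have [e|ne] := pselect (exists m, escapes x m).
  case: (ex_minnP e) => m /asboolP [im nVx] mmin.
  have xm : in_mult_closures m x.
    move=> j jm ij; apply: contrapT => nVj.
    have /mmin : escapes x j by apply/asboolP.
    by rewrite leqNgt jm.
  have oN : open (in_mult_closures m `&` ~` V m).
    exact: openI (open_in_mult_closures m) (closed_openC (open_index_clopen mt im).2).
  apply: filterS (open_nbhs_nbhs (conj oN (conj xm nVx))) => y [ym nVy].
  by rewrite (separating_fun_eq im nVx xm) (separating_fun_eq im nVy ym) subrr normr0.
have xN N : in_mult_closures N x.
  by move=> j _ ij; apply: contrapT => nVj; apply: ne; exists j; exact/asboolP.
rewrite separating_fun0; last first.
  by move=> m im; apply: contrapT => nVm; apply: ne; exists m; exact/asboolP.
pose N := Num.truncn eps^-1.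
have Neps : N.+1%:R^-1 < eps by rewrite invf_plt ?posrE ?ltr0n //; exact: truncnS_gt.
apply: filterS (open_nbhs_nbhs (conj (open_in_mult_closures N) (xN N))) => y yN.
rewrite sub0r normrN ger0_norm ?separating_fun_ge0 //.
exact: le_lt_trans (separating_fun_le yN) Neps.
Qed.

End SeparatingFunction.

Lemma compact_translation_unif_continuous {R : realType} {Om : topologicalZmodType}
    {g : Om -> R} : compact [set: Om] -> continuous g ->
  forall eps, 0 < eps -> \forall w \near (0 : Om), forall x, `|g (x + w) - g x| < eps.
Proof.
move=> cpt cg eps e0; have /compact_near_coveringP ncov := cpt.
suff : \forall w \near (0 : Om), [set: Om] `<=` (fun x => `|g (x + w) - g x| < eps).
  by apply: filterS => w Hw x; exact: Hw.
apply: ncov => x _.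
have e2 : 0 < eps / 2 by rewrite divr_gt0.
pose B := [set t | `|g x - g t| < eps / 2].
have nB : nbhs x B by move/cvgrPdist_lt : (cg x); apply.
have : nbhs (x + 0) B by rewrite addr0.
move=> /(@add_continuous Om (x, 0)) [[A W] /= [nA nW] AW].
exists (A `&` B, W); first by split => //; exact: filterI.
move=> [x' w] /= [[Ax' Bx'] Ww]; have /= Bx'w := AW (x', w) (conj Ax' Ww).
rewrite (splitr eps); apply: le_lt_trans (ler_distD (g x) _ _) _.
by rewrite distrC; apply: ltrD.
Qed.

Lemma Fseq_continuous {R : realType} {Om : topologicalZmodType} (w0 : Om) (g : Om -> R) :
  compact [set: Om] -> continuous g -> continuous (Fseq w0 g).
Proof.
move=> cpt cg w P /uniform_nbhs [E [entE EP]].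
rewrite -entourage_ballE in entE; case: entE => eps /= e0 epsE.
have := compact_translation_unif_continuous cpt cg eps e0.
have : (fun z => z - w) @ w --> (0 : Om) by rewrite -(subrr w); exact: continuous_subr.
move=> /[apply] /= near_gw.
suff : \forall w' \near w, P (Fseq w0 g w') by [].
near=> w'; apply: EP => n _; apply: epsE.
have gw' : forall x, `|g (x + (w' - w)) - g x| < eps by near: w'.
rewrite /ball /= /Fseq /transl_pow distrC.
by have := gw' (w + w0 *~ n); rewrite addrAC addrA [w + w']addrC addrK.
Unshelve. all: by end_near. Qed.

Lemma seqZ_hausdorff (R : realType) : hausdorff_space (seqZ R).
Proof.
move=> p q cpq; have : close p q by rewrite closeEnbhs.
rewrite hausdorrf_close_eq_in; last exact: Rhausdorff.
by move=> pq; apply/funext => n; apply: pq; rewrite inE.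
Qed.

Lemma compact_cancel_within_continuous {T U : topologicalType} (g : T -> U) (h : U -> T) :
  compact [set: T] -> hausdorff_space U -> continuous g -> cancel g h ->
  {within range g, continuous h}.
Proof.
move=> cpt hsU cg gK; apply/subspace_continuousP => _ [x _ <-].
suff : h @ within (range g) (nbhs (g x)) --> h (g x) by [].
rewrite gK => B; rewrite nbhsE; case=> W [oW Wx] WB.
have clK : closed (g @` ~` W).
  apply: compact_closed hsU _; apply: continuous_compact (continuous_subspaceT cg) _.
  by apply: subclosed_compact cpt _ => //; exact: open_closedC.
have nK : nbhs (g x) (~` (g @` ~` W)).
  apply: open_nbhs_nbhs; split; first exact: closed_openC.
  by move=> [y nWy /(can_inj gK) yx]; apply: nWy; rewrite yx.
suff : \forall y \near g x, range g y -> B (h y) by [].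
near=> y => -[z _ zy]; have nKy : ~ (g @` ~` W) y by near: y.
rewrite -zy gK; apply: WB; apply: contrapT => nWz; apply: nKy; by exists z.
Unshelve. all: by end_near. Qed.

Lemma within_continuous_pair {T U : topologicalType} {A : set T} {h : T -> U} :
  {within A, continuous h} ->
  {within A `*` A, continuous (fun p : T * T => (h p.1, h p.2))}.
Proof.
move=> /subspace_continuousP hA; apply/subspace_continuousP => -[p1 p2] [/= Ap1 Ap2].
suff : (fun p : T * T => (h p.1, h p.2)) @ within (A `*` A) (nbhs (p1, p2)) -->
  (h p1, h p2) by [].
apply: cvg_pair => B nB.
- exists ([set y | A y -> B (h y)], setT); first by split; [exact: hA | exact: filterT].
  by move=> [q1 q2] /= [+ _] [+ _]; apply.
- exists (setT, [set y | A y -> B (h y)]); first by split; [exact: filterT | exact: hA].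
  by move=> [q1 q2] /= [_ +] [_ +]; apply.
Qed.

Lemma within_continuous_comp {T U W : topologicalType} {A : set T} {f : T -> U} {h : U -> W} :
  {within A, continuous f} -> continuous h -> {within A, continuous (h \o f)}.
Proof.
move=> /subspace_continuousP cf ch; apply/subspace_continuousP => x Ax.
exact: cvg_comp (cf x Ax) (ch (f x)).
Qed.

Lemma shift_Fseq {R : realType} {Om : topologicalZmodType} (w0 : Om) (g : Om -> R)
    (w : Om) (k : int) :
  Defs.shift k (Fseq w0 g w) = Fseq w0 g (w + w0 *~ k).
Proof. by apply/funext => n; rewrite /Defs.shift /Fseq /transl_pow mulrzDr addrAC addrA. Qed.

Section FseqEmbedding.
Context {R : realType} {Om : topologicalZmodType} {w0 : Om} (mt : minimal_translation w0).
Context {g : Om -> R} (cg : continuous g).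

(* Two orbit sequences agree iff the translates of g agree on a dense set,
   hence everywhere; evaluating at -w1 uses that g vanishes only at 0. *)
Lemma Fseq_inj : g 0 = 0 -> (forall x, g x = 0 -> x = 0) -> injective (Fseq w0 g).
Proof.
move=> g0 gx0 w1 w2 Fw.
have gw a : g (a + w1) = g (a + w2).
  apply: contrapT => neq; pose h b := g (b + w1) - g (b + w2).
  have ch : continuous h.
    by move=> b; apply: cvgB; apply: continuous_comp (continuous_addr _ _) (cg _).
  have oh : open (h @^-1` (~` [set 0])).
    by have /continuousP := ch; apply; apply: closed_openC; exact: closed_eq.
  have [|n] := orbit_meets_open mt oh.
    by exists a; apply/eqP; rewrite subr_eq0; exact/eqP.
  apply; rewrite /h /=; apply/eqP; rewrite subr_eq0; apply/eqP.
  by have := congr1 (fun s : seqZ R => s n) Fw; rewrite /Fseq /transl_pow ![_ + w0 *~ n]addrC.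
have := gw (- w1); rewrite addNr g0 addrC => /esym/gx0/eqP.
by rewrite subr_eq0 => /eqP.
Qed.

Lemma hull_Fseq : compact [set: Om] -> hull (Fseq w0 g 0) = range (Fseq w0 g).
Proof.
move=> cpt; have cF := Fseq_continuous w0 g cpt cg; apply/seteqP; split.
  have clF : closed (range (Fseq w0 g)).
    apply: compact_closed (@seqZ_hausdorff R) _.
    exact: continuous_compact (continuous_subspaceT cF) cpt.
  rewrite /hull ((closure_id _).1 clF).
  by apply: closureS => _ [k _ <-]; rewrite shift_Fseq; exists (0 + w0 *~ k).
move=> _ [w _ <-] B /(cF w); rewrite nbhsE; case=> W [oW Ww] WB.
have [n Wn] := orbit_meets_open mt oW (ex_intro _ w Ww).
exists (Defs.shift n (Fseq w0 g 0)); split; first by exists n.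
by rewrite shift_Fseq add0r; exact: WB.
Qed.

End FseqEmbedding.

Definition hull_coord {R : realType} {Om : topologicalZmodType} (w0 : Om) (g : Om -> R)
  (y : seqZ R) : Om := xget 0 [set w | Fseq w0 g w = y].

Definition hull_add {R : realType} {Om : topologicalZmodType} (w0 : Om) (g : Om -> R)
  (x y : seqZ R) : seqZ R := Fseq w0 g (hull_coord w0 g x + hull_coord w0 g y).

Definition hull_opp {R : realType} {Om : topologicalZmodType} (w0 : Om) (g : Om -> R)
  (x : seqZ R) : seqZ R := Fseq w0 g (- hull_coord w0 g x).

Section HullGroup.
Context {R : realType} {Om : topologicalZmodType} {w0 : Om} {g : Om -> R}.
Hypotheses (cpt : compact [set: Om]) (mt : minimal_translation w0) (cg : continuous g).
Hypothesis Finj : injective (Fseq w0 g).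

Local Notation Phi := (Fseq w0 g).
Local Notation d := (Fseq w0 g 0).

Local Notation hull_coord := (hull_coord w0 g).
Local Notation hull_add := (hull_add w0 g).
Local Notation hull_opp := (hull_opp w0 g).

Lemma FseqK : cancel Phi hull_coord.
Proof.
move=> w; apply: Finj; rewrite /hull_coord.
by have := @xgetPex Om 0 [set w' | Phi w' = Phi w] (ex_intro _ w erefl).
Qed.

Lemma hull_coordK y : hull d y -> Phi (hull_coord y) = y.
Proof. by rewrite hull_Fseq // => -[w _ <-]; rewrite FseqK. Qed.

Lemma hull_coord_continuous : {within hull d, continuous hull_coord}.
Proof.
rewrite hull_Fseq //; apply: compact_cancel_within_continuous FseqK => //.
  exact: seqZ_hausdorff.
exact: Fseq_continuous.
Qed.

Lemma hull_group_structure_transport : hull_group_structure d hull_add hull_opp.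
Proof.
have cPhi : continuous Phi by exact: Fseq_continuous.
split; split.
- by move=> x y _ _; rewrite hull_Fseq //; exists (hull_coord x + hull_coord y).
- by move=> x _; rewrite hull_Fseq //; exists (- hull_coord x).
- by move=> x y z _ _ _; rewrite /hull_add !FseqK addrA.
- by move=> x Hx; rewrite /hull_add FseqK add0r addr0 hull_coordK.
- by move=> x Hx; rewrite /hull_add /hull_opp !FseqK subrr addNr.
- exact: (within_continuous_comp (within_continuous_pair hull_coord_continuous)
    (fun r => continuous_comp (@add_continuous Om r) (cPhi _))).
- exact: (within_continuous_comp hull_coord_continuous
    (fun r => continuous_comp (@opp_continuous Om r) (cPhi _))).
- by move=> k m; rewrite !shift_Fseq /hull_add !FseqK !add0r -mulrzDr.
Qed.

Lemma hull_top_group_iso_transport : hull_top_group_iso d hull_add hull_coord.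
Proof.
split.
- exact: hull_coord_continuous.
- exists Phi; split; first exact: Fseq_continuous.
    by move=> w; split; [rewrite hull_Fseq //; exists w | exact: FseqK].
  exact: hull_coordK.
- by move=> x y _ _; rewrite /hull_add FseqK.
Qed.

End HullGroup.

Theorem lemma4p3 (R : realType) (Om : topologicalZmodType) (w0 : Om) :
  cantor_group Om -> minimal_translation w0 ->
  exists f : Om -> R, continuous f /\
    exists (mul : seqZ R -> seqZ R -> seqZ R) (inv : seqZ R -> seqZ R),
      hull_group_structure (Fseq w0 f 0) mul inv /\
      exists phi : seqZ R -> Om, hull_top_group_iso (Fseq w0 f 0) mul phi.
Proof.
move=> [td cpt nop] mt; pose f := separating_fun R w0.
have cf : continuous f := separating_fun_continuous R mt.
have f_eq0 x : f x = 0 -> x = 0.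
  move=> fx0; apply: contrapT => /eqP x0.
  by have := separating_fun_gt0 R mt cpt td nop x0; rewrite -/f fx0 ltxx.
have Finj := Fseq_inj mt cf (separating_fun_at0 R) f_eq0.
exists f; split => //; exists (hull_add w0 f), (hull_opp w0 f); split.
  exact: hull_group_structure_transport.
by exists (hull_coord w0 f); exact: hull_top_group_iso_transport.
Qed.
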